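(* Let $f$, $X_n$, $Y_m$ be as in the context. If $n\geq 2$ and $m<n$, then every map $VX_n\to VY_m$ has some fibre containing at least $f(n)$ vertices; in particular there is no coarse $(f(n)-1)$-wiring of $X_n$ into $Y_m$.
   Context: Fix a function $f:\mathbb{N}\to\mathbb{N}$ (with $\mathbb{N}=\{1,2,\dots\}$) that is surjective, satisfies $f(1)=1$, $2\leq f(n)\leq n$ for all $n\geq 2$, and $|f^{-1}(k)|=\infty$ for every $k\geq 2$. For $n\in\mathbb{N}$ let $X_n$ be the graph with vertex set $\{0,1,\dots,f(n)-1\}\times\{0,1,\dots,2^{2^{2n}}f(n)\}$, with edges $(i,j)(i,j+1)$ for all $0\leq i\leq f(n)-1$, $0\leq j\leq 2^{2^{2n}}f(n)-1$, and $(i,j)(i+1,j)$ for all $0\leq i\leq f(n)-2$ and all $j$ that are multiples of $2^{2^{2n}}$. Let $Y_n$ be defined in the same way with $2^{2^{2n}}$ replaced everywhere by $2^{2^{2n+1}}$. A coarse $k$-wiring of a finite graph $\Gamma$ into a graph $Y$ is a continuous map sending vertices to vertices and edges onto unions of edges, such that each vertex of $Y$ has at most $k$ preimage vertices and each edge of $Y$ lies in the images of at most $k$ edges of $\Gamma$. *)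

From mathcomp Require Import all_boot.
Set Implicit Arguments. Unset Strict Implicit. Unset Printing Implicit Defensive.

Definition gridV (a L : nat) (v : nat * nat) : bool :=
  (v.1 < a) && (v.2 <= L * a).

(* gridE a L u v : u -> v is one of the listed edges, each undirected edge
   listed exactly once:  (i,j)(i,j+1)  for all i, j <= L*a - 1,
                         (i,j)(i+1,j)  for i <= a-2 and L %| j. *)
Definition gridE (a L : nat) (u v : nat * nat) : bool :=
  [&& gridV a L u, gridV a L v &
     ((u.1 == v.1) && (v.2 == u.2.+1))
     || [&& v.1 == u.1.+1, u.2 == v.2 & L %| u.2]].

Definition gridAdj (a L : nat) (u v : nat * nat) : bool :=
  gridE a L u v || gridE a L v u.

Definition XV (f : nat -> nat) (n : nat) := gridV (f n) (2 ^ (2 ^ (2 * n))).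
Definition XE (f : nat -> nat) (n : nat) := gridE (f n) (2 ^ (2 ^ (2 * n))).
Definition YV (f : nat -> nat) (n : nat) := gridV (f n) (2 ^ (2 ^ (2 * n).+1)).
Definition YAdj (f : nat -> nat) (n : nat) := gridAdj (f n) (2 ^ (2 ^ (2 * n).+1)).

(* A walk in Y is given by its start a and the list p of subsequent vertices. *)
Definition is_walk {T : eqType} (VY : pred T) (EY : rel T) (a b : T) (p : seq T) : bool :=
  [&& all VY (a :: p), path EY a p & last a p == b].

Definition walk_uses {T : eqType} (a : T) (p : seq T) (y z : T) : bool :=
  has (fun e => (e == (y, z)) || (e == (z, y))) (zip (a :: p) p).

(* EG lists each undirected edge of G once (as an ordered pair), EY is the
   symmetric adjacency of Y.  Combinatorially, a continuous map sending
   vertices to vertices and edges onto unions of edges is a vertex map phi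
   together with, for each edge uv of G, a walk of positive length in Y from
   phi u to phi v (the image of the edge). *)
Definition coarse_wiring {T T' : eqType} (k : nat)
  (VG : pred T) (EG : rel T) (VY : pred T') (EY : rel T') : Prop :=
  exists (phi : T -> T') (P : T -> T -> seq T'),
    [/\ (forall v, VG v -> VY (phi v)),
        (forall u v, VG u -> VG v -> EG u v ->
           is_walk VY EY (phi u) (phi v) (P u v) /\ 0 < size (P u v)),
        (forall y, VY y -> forall s : seq T,
           uniq s -> all VG s -> all (fun x => phi x == y) s -> size s <= k)
      & (* each edge of Y lies in the images of at most k edges of G *)
        (forall y z, VY y -> VY z -> EY y z -> forall s : seq (T * T),
           uniq s ->
           (forall e, e \in s -> [&& VG e.1, VG e.2, EG e.1 e.2 &
                                    walk_uses (phi e.1) (P e.1 e.2) y z]) ->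
           size s <= k)].

From mathcomp Require Import all_boot zify.
Set Implicit Arguments. Unset Strict Implicit. Unset Printing Implicit Defensive.

(* Pigeonhole on vertex counts.  With L = 2^(2^(2n)) = K * K for
   K = 2^(2^(2n-1)), the grid Y_m (m < n) has f(m) (L' f(m) + 1) <= L vertices,
   since its scale L' is at most K and 2 f(m)^2 <= 2 n^2 <= K.  The grid X_n
   has f(n) (L f(n) + 1) > L (f(n) - 1) vertices, so some fibre of any map
   VX_n -> VY_m contains f(n) of them, which a coarse (f(n) - 1)-wiring
   forbids. *)

Lemma sum_count_fibres (T T' : eqType) (phi : T -> T') (sx : seq T) (sy : seq T') :
  uniq sy -> {in sx, forall x, phi x \in sy} ->
  \sum_(y <- sy) count (fun x => phi x == y) sx = size sx.
Proof.
move=> uniq_sy; elim: sx => [|x sx IHsx] phi_sx /=; first by rewrite big1_seq.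
rewrite big_split /= IHsx => [|z sx_z]; last by rewrite phi_sx // inE sx_z orbT.
rewrite (bigD1_seq (phi x)) ?phi_sx ?mem_head //= eqxx big1 // => y.
by rewrite eq_sym => /negPf->.
Qed.

Lemma exists_large_fibre (T T' : eqType) (phi : T -> T') (sx : seq T) (sy : seq T') k :
  uniq sy -> {in sx, forall x, phi x \in sy} -> size sy * k < size sx ->
  exists2 y, y \in sy & k < count (fun x => phi x == y) sx.
Proof.
move=> uniq_sy phi_sx; rewrite -(sum_count_fibres uniq_sy phi_sx).
move=> lt_sum; apply/hasP; apply: contraLR lt_sum => /hasPn small_fibres.
have fibres_le_k : \sum_(y <- sy | y \in sy) count (fun x => phi x == y) sx
                   <= \sum_(y <- sy | y \in sy) k.
  by apply: leq_sum => y /small_fibres; rewrite -leqNgt.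
by rewrite -leqNgt big_seq (leq_trans fibres_le_k) // -big_seq big_const_seq
  count_predT iter_addn_0 mulnC.
Qed.

Definition grid_enum (a L : nat) : seq (nat * nat) :=
  [seq (i, j) | i <- iota 0 a, j <- iota 0 (L * a + 1)].

Lemma mem_grid_enum a L v : (v \in grid_enum a L) = gridV a L v.
Proof.
case: v => i j; rewrite /gridV /=.
apply/allpairsP/andP => [[[i' j'] /= [+ + [-> ->]]]|[lt_i le_j]].
  by rewrite !mem_iota; lia.
by exists (i, j); split=> //=; rewrite mem_iota; lia.
Qed.

Lemma grid_enum_uniq a L : uniq (grid_enum a L).
Proof.
by apply: allpairs_uniq; rewrite ?iota_uniq // => -[? ?] [? ?] _ _ [-> ->].
Qed.

Lemma size_grid_enum a L : size (grid_enum a L) = a * (L * a + 1).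
Proof. by rewrite size_allpairs !size_iota. Qed.

Lemma grid_map_large_fibre a L b L' (phi : nat * nat -> nat * nat) :
  0 < a -> b * (L' * b + 1) <= L ->
  (forall v, gridV a L v -> gridV b L' (phi v)) ->
  exists y, gridV b L' y /\ exists s : seq (nat * nat),
    [/\ uniq s, all (gridV a L) s, all (fun x => phi x == y) s & a <= size s].
Proof.
move=> a_gt0 le_card phi_grid.
have phi_enum : {in grid_enum a L, forall v, phi v \in grid_enum b L'}.
  by move=> v; rewrite !mem_grid_enum; apply: phi_grid.
have lt_card : size (grid_enum b L') * a.-1 < size (grid_enum a L).
  rewrite !size_grid_enum; apply: leq_ltn_trans (leq_mul le_card (leqnn _)) _.
  nia.
have [y Y_y big_fibre] := exists_large_fibre (grid_enum_uniq b L') phi_enum lt_card.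
exists y; split; first by rewrite -mem_grid_enum.
exists [seq x <- grid_enum a L | phi x == y]; split.
- by rewrite filter_uniq ?grid_enum_uniq.
- by apply/allP => x; rewrite mem_filter mem_grid_enum => /andP[].
- exact: filter_all.
- by rewrite size_filter (leq_trans (leqSpred a) big_fibre).
Qed.

Lemma double_le_exp2 n : 0 < n -> 2 * n <= 2 ^ n.
Proof. by case: n => // n _; rewrite expnS leq_mul2l /= ltn_expl. Qed.

Lemma double_sq_le_exp2_exp2 n : 0 < n -> 2 * n ^ 2 <= 2 ^ (2 ^ (2 * n).-1).
Proof.
move=> n_gt0; apply: (@leq_trans (2 ^ (2 * n))).
  rewrite -mulnn mulnA [in X in _ <= X]mul2n -[in X in _ <= X]addnn expnD.
  exact: leq_mul (double_le_exp2 n_gt0) (ltnW (ltn_expl n (isT : 1 < 2))).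
rewrite leq_exp2l //; have := ltn_expl (2 * n).-1 (isT : 1 < 2).
by rewrite prednK // muln_gt0.
Qed.

Lemma exp2_exp2_halves n : 0 < n ->
  2 ^ (2 ^ (2 * n)) = 2 ^ (2 ^ (2 * n).-1) * 2 ^ (2 ^ (2 * n).-1).
Proof.
by move=> n_gt0; rewrite -expnD addnn -mul2n -expnS prednK // muln_gt0.
Qed.

Lemma grid_card_le_square K L b :
  L <= K -> 2 * b ^ 2 <= K -> b * (L * b + 1) <= K * K.
Proof.
move=> le_LK le_bK.
apply: (@leq_trans (K * (2 * b ^ 2))); last by rewrite leq_mul2l le_bK orbT.
by case: b le_bK => // b; nia.
Qed.

Lemma Ygrid_card_le_Xscale m n b : m < n -> b <= n ->
  b * (2 ^ (2 ^ (2 * m).+1) * b + 1) <= 2 ^ (2 ^ (2 * n)).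
Proof.
move=> lt_mn le_bn; have n_gt0 : 0 < n by lia.
rewrite exp2_exp2_halves // grid_card_le_square //.
  by rewrite !leq_exp2l //; lia.
by apply: leq_trans (double_sq_le_exp2_exp2 n_gt0); rewrite leq_mul2l leq_exp2r.
Qed.

Theorem mainTheorem3 (f : nat -> nat)
  (f_surj : forall k, 0 < k -> exists n, 0 < n /\ f n = k)
  (f_1 : f 1 = 1)
  (f_bnd : forall n, 2 <= n -> 2 <= f n <= n)
  (f_inf : forall k, 2 <= k -> forall N, exists n, N < n /\ f n = k)
  (n m : nat) (hn : 2 <= n) (hm : 0 < m) (hmn : m < n) :
  (forall phi : nat * nat -> nat * nat,
     (forall v, XV f n v -> YV f m (phi v)) ->
     exists y, YV f m y /\
       exists s : seq (nat * nat),
         [/\ uniq s, all (XV f n) s, all (fun x => phi x == y) s & f n <= size s])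
  /\ ~ coarse_wiring (f n - 1) (XV f n) (XE f n) (YV f m) (YAdj f m).
Proof.
have fn_gt0 : 0 < f n by case/andP: (f_bnd n hn); lia.
have fm_le_n : f m <= n.
  case: (ltnP m 2) => [lt_m2 | /f_bnd]; last by lia.
  have -> : m = 1 by lia.
  by rewrite f_1; lia.
have card_le := Ygrid_card_le_Xscale hmn fm_le_n.
split=> [phi|]; first exact: grid_map_large_fibre fn_gt0 card_le.
case=> phi [P [phi_V _ fibre_le _]].
have [y [Y_y [s [uniq_s X_s fibre_s size_s]]]] :=
  grid_map_large_fibre fn_gt0 card_le phi_V.
by have := leq_trans size_s (fibre_le y Y_y s uniq_s X_s fibre_s); lia.
Qed.
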